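(* Assume PONO holds. Let $Q$ be a finite nonempty set of tables, $\mathbf{W}\in\mathbb{R}_{\ge0}^{\mathbb{O}}$ a weight vector and $\alpha_U\ge1$. Run RTA with internal precision $\alpha_i=\alpha_U^{1/|Q|}$ and let $p$ be a plan in $\mathcal{P}^Q$ minimizing $C_{\mathbf{W}}(\mathbf{c}(p))$. Then $C_{\mathbf{W}}(\mathbf{c}(p))\le\alpha_U\cdot\min_{p'\in\mathcal{A}(Q)}C_{\mathbf{W}}(\mathbf{c}(p'))$, i.e. $p$ is an $\alpha_U$-approximate solution of the weighted MOQO instance $\langle Q,\mathbf{W}\rangle$.
   Context: Setting as follows. A finite set $\mathbb{O}$ of $l\ge1$ objectives, a finite set $\mathbb{J}$ of join operators; each table $t$ has a finite nonempty set $\mathcal{A}(\{t\})$ of scan plans; for $|q|\ge2$, $\mathcal{A}(q)$ is the set of plans $\mathrm{Combine}(j,p_1,p_2)$ with $q=q_1\dot\cup q_2$ nonempty parts, $j\in\mathbb{J}$, $p_i\in\mathcal{A}(q_i)$. Each plan has cost vector $\mathbf{c}(p)\in\mathbb{R}_{\ge0}^{\mathbb{O}}$; $C_{\mathbf{W}}(\mathbf{c})=\sum_{o}\mathbf{c}^o\mathbf{W}^o$. $\mathbf{c}_1\preceq\mathbf{c}_2$ iff $\mathbf{c}_1^o\le\mathbf{c}_2^o$ for all $o$; $\mathbf{c}_1\preceq_\alpha\mathbf{c}_2$ iff $\mathbf{c}_1^o\le\alpha\mathbf{c}_2^o$ for all $o$. PONO: for all $\alpha\ge1$, $j$, and plans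 with $\mathbf{c}(p_L^* )\preceq_\alpha\mathbf{c}(p_L)$, $\mathbf{c}(p_R^* )\preceq_\alpha\mathbf{c}(p_R)$ ($p_L,p_L^*$ for the same table set, likewise $p_R,p_R^*$), $\mathbf{c}(\mathrm{Combine}(j,p_L^*,p_R^* ))\preceq_\alpha\mathbf{c}(\mathrm{Combine}(j,p_L,p_R))$. $\mathrm{Prune}(\mathcal{P},p_N,\alpha_i)$: if no $p\in\mathcal{P}$ has $\mathbf{c}(p)\preceq_{\alpha_i}\mathbf{c}(p_N)$, delete all $p\in\mathcal{P}$ with $\mathbf{c}(p_N)\preceq\mathbf{c}(p)$ and insert $p_N$; else do nothing. RTA: for each $t\in Q$, $\mathcal{P}^{\{t\}}$ starts empty and $\mathrm{Prune}$ is called with every scan plan of $t$; then for $k=2,\dots,|Q|$ and each $q\subseteq Q$ with $|q|=k$, $\mathcal{P}^q$ starts empty and $\mathrm{Prune}(\mathcal{P}^q,\mathrm{Combine}(j,p_1,p_2),\alpha_i)$ is called for all splits $q=q_1\dot\cup q_2$ into nonempty parts, all $p_1\in\mathcal{P}^{q_1}$, $p_2\in\mathcal{P}^{q_2}$, $j\in\mathbb{J}$. *)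

From Stdlib Require Import Reals Permutation.
From mathcomp Require Import all_boot.

Set Implicit Arguments.
Unset Strict Implicit.
Unset Printing Implicit Defensive.

Inductive plan (T J Sc : Type) : Type :=
  | Scan : T -> Sc -> plan T J Sc
  | Combine : J -> plan T J Sc -> plan T J Sc -> plan T J Sc.

Section Plans.
Variables (T J Sc O : finType).
Variable scans : T -> {set Sc}.     (* A({t}) = [seq Scan t s | s in scans t] *)

Fixpoint ptables (p : plan T J Sc) : {set T} :=
  match p with
  | Scan t _ => [set t]
  | Combine _ p1 p2 => ptables p1 :|: ptables p2
  end.

Fixpoint wf (p : plan T J Sc) : Prop :=
  match p with
  | Scan t s => s \in scans t
  | Combine _ p1 p2 => wf p1 /\ wf p2 /\ [disjoint ptables p1 & ptables p2]
  end.

Definition in_A (q : {set T}) (p : plan T J Sc) : Prop := wf p /\ ptables p = q.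

Definition Rleb (x y : R) : bool := if Rle_dec x y then true else false.

Definition approx_dom (alpha : R) (c1 c2 : O -> R) : Prop :=
  forall o, Rle (c1 o) (Rmult alpha (c2 o)).
Definition approx_domb (alpha : R) (c1 c2 : O -> R) : bool :=
  [forall o, Rleb (c1 o) (Rmult alpha (c2 o))].
Definition domb (c1 c2 : O -> R) : bool := [forall o, Rleb (c1 o) (c2 o)].

Definition CW (W : O -> R) (c : O -> R) : R := foldr (fun o acc => Rplus (Rmult (c o) (W o)) acc) R0 (enum O).

Variable c : plan T J Sc -> O -> R.

Definition PONO : Prop :=
  forall (alpha : R) (j : J) (pL pLs pR pRs : plan T J Sc),
    Rle 1 alpha ->
    wf pL -> wf pLs -> wf pR -> wf pRs ->
    ptables pLs = ptables pL -> ptables pRs = ptables pR ->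
    [disjoint ptables pL & ptables pR] ->
    approx_dom alpha (c pLs) (c pL) -> approx_dom alpha (c pRs) (c pR) ->
    approx_dom alpha (c (Combine j pLs pRs)) (c (Combine j pL pR)).

Definition prune (alpha : R) (P : seq (plan T J Sc)) (pN : plan T J Sc)
  : seq (plan T J Sc) :=
  if has (fun p => approx_domb alpha (c p) (c pN)) P then P
  else pN :: filter (fun p => ~~ domb (c pN) (c p)) P.

Definition candidates (P : {set T} -> seq (plan T J Sc)) (q : {set T})
  : seq (plan T J Sc) :=
  flatten [seq flatten [seq flatten [seq [seq Combine j p1 p2 | j <- enum J]
                                    | p2 <- P (q :\: q1)]
                       | p1 <- P q1]
          | q1 <- enum (powerset q) & (q1 != set0) && (q1 != q)].

(* P is a possible outcome of RTA on Q with internal precision alpha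
   (Prune calls in an arbitrary order within each table set q). *)
Definition rta_result (alpha : R) (Q : {set T}) (P : {set T} -> seq (plan T J Sc))
  : Prop :=
  (forall t, t \in Q ->
     exists s, Permutation s [seq Scan J t x | x <- enum (scans t)] /\
               P [set t] = foldl (prune alpha) [::] s) /\
  (forall q : {set T}, q \subset Q -> 2 <= #|q| ->
     exists s, Permutation s (candidates P q) /\
               P q = foldl (prune alpha) [::] s).

End Plans.

From Stdlib Require Import Reals Permutation Lra.
From mathcomp Require Import all_boot zify.

Set Implicit Arguments.
Unset Strict Implicit.
Unset Printing Implicit Defensive.

(* Every table set q kept by RTA is covered within factor alpha_i^|q|: each
   valid plan for q is alpha_i^|q|-dominated by a plan in P q.  For a scan
   plan this is a single Prune step; for Combine(j, p1, p2) the induction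
   hypotheses give y1, y2 in P q1, P q2 dominating p1, p2 within
   alpha_i^(|q|-1), PONO transfers this to Combine(j, y1, y2), a candidate
   for q, and pruning that candidate costs one more factor alpha_i.  With
   alpha_i^|Q| = alpha_U and the monotonicity of the weighted cost, the
   cheapest plan of P Q is within alpha_U of every plan for Q. *)

Lemma InP (U : eqType) (x : U) (s : seq U) : reflect (List.In x s) (x \in s).
Proof.
elim: s => [|y s IH] /=; first by right.
rewrite in_cons; apply: (iffP orP) => [[/eqP ->|/IH]|[->|/IH]]; auto.
Qed.

Lemma RlebP x y : reflect (Rle x y) (Rleb x y).
Proof. by rewrite /Rleb; case: Rle_dec => ?; constructor. Qed.

Section Dominance.
Variable O : finType.

Lemma approx_dombP (a : R) (c1 c2 : O -> R) :
  reflect (approx_dom a c1 c2) (approx_domb a c1 c2).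
Proof. by apply: (iffP forallP) => H o; apply/RlebP/H. Qed.

Lemma dombP (c1 c2 : O -> R) : reflect (forall o, Rle (c1 o) (c2 o)) (domb c1 c2).
Proof. by apply: (iffP forallP) => H o; apply/RlebP/H. Qed.

Lemma approx_dom_refl (a : R) (c1 : O -> R) :
  Rle 1 a -> (forall o, Rle 0 (c1 o)) -> approx_dom a c1 c1.
Proof. by move=> a_ge1 c1_ge0 o; have := c1_ge0 o; nra. Qed.

Lemma approx_dom_trans (a b : R) (c1 c2 c3 : O -> R) : Rle 0 a ->
  approx_dom a c1 c2 -> approx_dom b c2 c3 -> approx_dom (a * b) c1 c3.
Proof.
move=> a_ge0 D12 D23 o; rewrite Rmult_assoc.
exact: Rle_trans (D12 o) (Rmult_le_compat_l _ _ _ a_ge0 (D23 o)).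
Qed.

Lemma approx_dom_le (a b : R) (c1 c2 : O -> R) :
  Rle a b -> (forall o, Rle 0 (c2 o)) -> approx_dom a c1 c2 -> approx_dom b c1 c2.
Proof.
move=> le_ab c2_ge0 D o.
exact: Rle_trans (D o) (Rmult_le_compat_r _ _ _ (c2_ge0 o) le_ab).
Qed.

Lemma CW_approx_dom (W : O -> R) (a : R) (c1 c2 : O -> R) :
  (forall o, Rle 0 (W o)) -> approx_dom a c1 c2 -> Rle (CW W c1) (a * CW W c2).
Proof.
rewrite /CW => W_ge0 D; elim: (enum O) => [|o s IH] /=; first lra.
have := Rmult_le_compat_r _ _ _ (W_ge0 o) (D o); nra.
Qed.

End Dominance.

Lemma Rpower_inv_ge1 a n : Rle 1 a -> 0 < n -> Rle 1 (Rpower a (/ INR n)).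
Proof.
move=> a_ge1 n_gt0; rewrite -(Rpower_O a); last lra.
apply: Rle_Rpower => //; apply/Rlt_le/Rinv_0_lt_compat/lt_0_INR/ltP.
by rewrite n_gt0.
Qed.

Lemma Rpower_inv_pow a n : Rle 1 a -> 0 < n -> pow (Rpower a (/ INR n)) n = a.
Proof.
move=> a_ge1 n_gt0.
have n_pos : Rlt 0 (INR n) by apply/lt_0_INR/ltP.
rewrite -Rpower_pow; last by have := Rpower_inv_ge1 a_ge1 n_gt0; lra.
by rewrite Rpower_mult Rinv_l ?Rpower_1 //; lra.
Qed.

Lemma ptables_gt0 (T J Sc : finType) (p : plan T J Sc) : 0 < #|ptables p|.
Proof.
elim: p => [t sc|j p1 IH1 p2 IH2] /=; first by rewrite cards1.
exact: leq_trans IH1 (subset_leq_card (subsetUl _ _)).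
Qed.

Lemma proper_subset_split (T : finType) (q q1 : {set T}) :
  q1 \subset q -> q1 != set0 -> q1 != q ->
  [/\ 0 < #|q1| < #|q|, 0 < #|q :\: q1| < #|q| & #|q1| + #|q :\: q1| = #|q|].
Proof.
move=> sub_q1 q1_n0 q1_nq.
have lt_q1 : #|q1| < #|q| by apply: proper_card; rewrite properEneq q1_nq.
have := card_gt0 q1; rewrite q1_n0 cardsDS // => q1_gt0.
by split; lia.
Qed.

Section RTA.
Variables (T J Sc O : finType) (scans : T -> {set Sc}).
Variable c : plan T J Sc -> O -> R.

Local Notation plan := (plan T J Sc).
Local Notation prune := (prune c).
Local Notation in_A := (@in_A T J Sc scans).
Local Notation wf := (@wf T J Sc scans).

Definition approximated (a : R) (P : seq plan) (x : plan) : Prop :=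
  exists2 y, List.In y P & approx_dom a (c y) (c x).

Lemma in_foldl_prune a acc s x :
  List.In x (foldl (prune a) acc s) -> List.In x acc \/ List.In x s.
Proof.
elim: s acc => [|b s IH] acc /=; first by left.
case/IH=> [|]; last by right; right.
rewrite /prune; case: has; first by left.
by case=> [<-|/List.filter_In []]; auto.
Qed.

Lemma prune_approximated a acc b x :
  approximated a acc x -> approximated a (prune a acc b) x.
Proof.
case=> y y_in Dy; rewrite /prune; case: has; first by exists y.
have [/dombP Dby|Dby] := boolP (domb (c b) (c y)).
  by exists b; [left | move=> o; apply: Rle_trans (Dby o) (Dy o)].
by exists y => //; right; apply/List.filter_In; rewrite Dby.
Qed.

Lemma prune_approximates_new a acc b : Rle 1 a -> (forall o, Rle 0 (c b o)) ->
  approximated a (prune a acc b) b.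
Proof.
move=> a_ge1 cb_ge0; rewrite /prune.
case: (boolP (has _ _)) => [/List.existsb_exists [y [y_in /approx_dombP Dy]] | _].
  by exists y.
by exists b; [left | exact: approx_dom_refl].
Qed.

Lemma foldl_prune_approximated a acc s x :
  approximated a acc x -> approximated a (foldl (prune a) acc s) x.
Proof.
by elim: s acc => [|b s IH] acc //= Hx; apply/IH/prune_approximated.
Qed.

Lemma foldl_prune_approximates a s s' x : Rle 1 a -> Permutation s s' ->
  List.In x s' -> (forall o, Rle 0 (c x o)) ->
  approximated a (foldl (prune a) [::] s) x.
Proof.
move=> a_ge1 perm /(Permutation_in _ (Permutation_sym perm)) + cx_ge0.
clear perm; elim: s [::] => [|b s IH] acc //= [->|x_in]; last exact: IH.
by apply: foldl_prune_approximated; apply: prune_approximates_new.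
Qed.

Lemma in_candidates (P : {set T} -> seq plan) q x :
  List.In x (candidates P q) <->
  exists (q1 : {set T}) j p1 p2,
    [/\ x = Combine j p1 p2, q1 \subset q, q1 != set0, q1 != q
       & List.In p1 (P q1) /\ List.In p2 (P (q :\: q1))].
Proof.
rewrite /candidates; split.
- case/List.in_concat=> _ [/List.in_map_iff [q1 [<- /List.filter_In]]].
  case=> /InP q1_in /andP [n0 nq].
  case/List.in_concat=> _ [/List.in_map_iff [p1 [<- p1_in]]].
  case/List.in_concat=> _ [/List.in_map_iff [p2 [<- p2_in]]].
  case/List.in_map_iff=> j [<- _].
  by exists q1, j, p1, p2; split; rewrite // -powersetE -mem_enum.
- case=> q1 [j [p1 [p2 [-> sub n0 nq [p1_in p2_in]]]]].
  apply/List.in_concat; eexists; split.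
    apply/List.in_map_iff; exists q1; split; first reflexivity.
    apply/List.filter_In; rewrite n0 nq; split=> //.
    by apply/InP; rewrite mem_enum powersetE.
  apply/List.in_concat; eexists; split; first by apply/List.in_map_iff; exists p1.
  apply/List.in_concat; eexists; split; first by apply/List.in_map_iff; exists p2.
  by apply/List.in_map_iff; exists j; split=> //; apply/InP; rewrite mem_enum.
Qed.

Lemma Combine_in_candidates (P : {set T} -> seq plan) (q1 q2 : {set T}) j p1 p2 :
  [disjoint q1 & q2] -> 0 < #|q1| -> 0 < #|q2| ->
  List.In p1 (P q1) -> List.In p2 (P q2) ->
  List.In (Combine j p1 p2) (candidates P (q1 :|: q2)).
Proof.
move=> disj q1_gt0 q2_gt0 p1_in p2_in.
have card_q : #|q1 :|: q2| = #|q1| + #|q2|.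
  by apply/eqP; rewrite (leq_card_setU q1 q2).2.
have disj21 : [disjoint q2 & q1] by rewrite disjoint_sym.
apply/in_candidates; exists q1, j, p1, p2; split=> //.
- exact: subsetUl.
- by rewrite -card_gt0.
- by apply/eqP => E; move: card_q; rewrite -E; lia.
by rewrite setDUl setDv set0U (setDidPl disj21).
Qed.

Lemma in_A_Combine (q1 q2 : {set T}) j p1 p2 : [disjoint q1 & q2] ->
  in_A q1 p1 -> in_A q2 p2 -> in_A (q1 :|: q2) (Combine j p1 p2).
Proof. by move=> disj [wf1 E1] [wf2 E2]; rewrite /in_A /= E1 E2. Qed.

Variables (a : R) (Q : {set T}) (P : {set T} -> seq plan).
Hypothesis run : rta_result scans c a Q P.

Lemma rta_in_A (q : {set T}) x :
  q \subset Q -> 0 < #|q| -> List.In x (P q) -> in_A q x.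
Proof.
have [n] := ubnP #|q|; elim: n q x => // n IH q x lt_q sub_qQ q_gt0 x_in.
case: run => run_scan run_join.
have [q_le1|q_ge2] := leqP #|q| 1.
  have /cards1P [t q_t] : #|q| == 1 by rewrite eqn_leq q_le1.
  have tQ : t \in Q by apply: (subsetP sub_qQ); rewrite q_t set11.
  have [s [perm Ps]] := run_scan t tQ.
  move: x_in; rewrite q_t Ps => /in_foldl_prune [] // /(Permutation_in _ perm).
  by case/List.in_map_iff=> sc [<- /InP]; rewrite mem_enum.
have [s [perm Ps]] := run_join q sub_qQ q_ge2.
move: x_in; rewrite Ps => /in_foldl_prune [] // /(Permutation_in _ perm).
case/in_candidates=> q1 [j [p1 [p2 [-> sub_q1 n0 nq [p1_in p2_in]]]]].
have [/andP [q1_gt0 lt_q1] /andP [q2_gt0 lt_q2] _] := proper_subset_split sub_q1 n0 nq.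
have A1 := IH q1 p1 (leq_trans lt_q1 lt_q) (subset_trans sub_q1 sub_qQ) q1_gt0 p1_in.
have A2 := IH _ p2 (leq_trans lt_q2 lt_q)
  (subset_trans (subsetDl _ _) sub_qQ) q2_gt0 p2_in.
rewrite -{1}(setID q q1) (setIidPr sub_q1).
apply: in_A_Combine A1 A2.
by rewrite disjoint_sym disjoints_subset setDE subsetIr.
Qed.

Hypothesis c_ge0 : forall p, wf p -> forall o, Rle 0 (c p o).
Hypothesis pono : PONO scans c.
Hypothesis a_ge1 : Rle 1 a.

Lemma rta_approximates p :
  wf p -> ptables p \subset Q -> approximated (a ^ #|ptables p|) (P (ptables p)) p.
Proof.
case: run => run_scan run_join.
elim: p => [t sc|j p1 IH1 p2 IH2] /= wf_p sub_pQ.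
  have tQ : t \in Q by apply: (subsetP sub_pQ); rewrite set11.
  have [s [perm ->]] := run_scan t tQ.
  rewrite cards1 pow_1; apply: foldl_prune_approximates perm _ _ => //.
    by apply/List.in_map_iff; exists sc; split=> //; apply/InP; rewrite mem_enum.
  exact: (c_ge0 (p := Scan J t sc)).
case: wf_p => wf1 [wf2 disj].
set q1 := ptables p1 in IH1 disj sub_pQ *.
set q2 := ptables p2 in IH2 disj sub_pQ *.
have [sub1 sub2] : q1 \subset Q /\ q2 \subset Q by apply/andP; rewrite -subUset.
have [y1 y1_in D1] := IH1 wf1 sub1.
have [y2 y2_in D2] := IH2 wf2 sub2.
have q1_gt0 : 0 < #|q1| := ptables_gt0 p1.
have q2_gt0 : 0 < #|q2| := ptables_gt0 p2.
have card_q : #|q1 :|: q2| = #|q1| + #|q2|.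
  by apply/eqP; rewrite (leq_card_setU q1 q2).2.
have [wy1 ty1] := rta_in_A sub1 q1_gt0 y1_in.
have [wy2 ty2] := rta_in_A sub2 q2_gt0 y2_in.
have [k card_k] : exists k, #|q1| + #|q2| = k.+1.
  by exists (#|q1| + #|q2|).-1; lia.
have Dy : approx_dom (a ^ k) (c (Combine j y1 y2)) (c (Combine j p1 p2)).
  apply: pono => //; first exact: pow_R1_Rle.
  - apply: approx_dom_le (c_ge0 wf1) D1; apply: Rle_pow => //; apply/leP; lia.
  - apply: approx_dom_le (c_ge0 wf2) D2; apply: Rle_pow => //; apply/leP; lia.
have cand := Combine_in_candidates j disj q1_gt0 q2_gt0 y1_in y2_in.
have [s [perm Ps]] := run_join _ sub_pQ ltac:(lia).
have wf_y : wf (Combine j y1 y2) by rewrite /= ty1 ty2.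
have [y y_in D] := foldl_prune_approximates a_ge1 perm cand (c_ge0 wf_y).
rewrite -Ps in y_in; exists y => //; rewrite card_q card_k /=.
by apply: approx_dom_trans D Dy; lra.
Qed.

End RTA.

Theorem corollary1 (T J Sc O : finType) (scans : T -> {set Sc})
    (c : plan T J Sc -> O -> R)
    (scans_nonempty : forall t, scans t != set0)
    (c_nonneg : forall p, wf scans p -> forall o, Rle 0 (c p o))
    (pono : PONO scans c)
    (Q : {set T}) (Q_nonempty : Q != set0)
    (W : O -> R) (W_nonneg : forall o, Rle 0 (W o))
    (alphaU : R) (alphaU_ge1 : Rle 1 alphaU)
    (P : {set T} -> seq (plan T J Sc))
    (run : rta_result scans c (Rpower alphaU (/ INR #|Q|)) Q P)
    (p : plan T J Sc) (p_in : List.In p (P Q))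
    (p_min : forall p', List.In p' (P Q) -> Rle (CW W (c p)) (CW W (c p'))) :
  forall p' : plan T J Sc, in_A scans Q p' ->
    Rle (CW W (c p)) (Rmult alphaU (CW W (c p'))).
Proof.
move=> p' [wf_p' tables_p'].
have Q_gt0 : 0 < #|Q| by rewrite card_gt0.
have alpha_ge1 := Rpower_inv_ge1 alphaU_ge1 Q_gt0.
have sub_p'Q : ptables p' \subset Q by rewrite tables_p'.
have [y y_in D] := rta_approximates run c_nonneg pono alpha_ge1 wf_p' sub_p'Q.
rewrite tables_p' Rpower_inv_pow // in y_in D.
exact: Rle_trans (p_min _ y_in) (CW_approx_dom W_nonneg D).
Qed.
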